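(* Let $q$ be a power of an odd prime $p$, $s\ge2$, and $n\ge s$ integers with $d_{\max\text{-}iso}(q;[n,s])\ge1$; let $\pi:\mathbb{F}_{q^s}\to\mathbb{F}_q^n$ be an isometry whose image $\pi(\mathbb{F}_{q^s})$ is an $[n,s,d]_q$ code with $d=d_{\max\text{-}iso}(q;[n,s])$. Let $a,b\in\mathbb{F}_{q^s}$ with $b\neq0$ and let $N\ge2$. Let $r\ge0$ be such that $p^r$ divides $N+1$ but $p^{r+1}$ does not, let $N+1=p^r(m+1)$, let $\theta\in\overline{\mathbb{F}}_q$ be a primitive $2(m+1)$-th root of unity, and let $\mu^2=-1$. Let $S_1=\{-\mu/b+\theta^i+\theta^{-i}:1\le i\le m\}\cup\{\mu/b+\theta^i+\theta^{-i}:1\le i\le m\}$ and $S_2=\{-\mu/b+2,-\mu/b-2,\mu/b+2,\mu/b-2\}$. Assume: if $r=0$, then $a/b\notin S_1$; if $r\ge1$ and $m=0$, then $a/b\notin S_2$; if $r\ge1$ and $m\ge1$, then $a/b\notin S_1\cup S_2$. Then $\pi^{\otimes 2N}(\hat C_N(a,b))$ is an LCD code over $\mathbb{F}_q$ with parameters $[2nN,sN,D^*]_q$, where $D^*\ge dD$ and $D$ is the minimum distance of $\hat C_N(a,b)$.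
   Context: For a field $K$, $a,b\in K$ and $N\ge 2$, $\hat T_N(a,b)$ is the $N\times N$ symmetric tridiagonal Toeplitz matrix with diagonal entries $a$, first super- and sub-diagonal entries $b$, other entries $0$; $\hat C_N(a,b)$ is the $[2N,N]$ linear code over $K$ (here $K=\mathbb{F}_{q^s}$) with generator matrix $[I_N\mid\hat T_N(a,b)]$. A linear code $C$ is LCD if $C\cap C^\perp=\{0\}$ (Euclidean dual). An $\mathbb{F}_q$-linear map $\pi:\mathbb{F}_{q^s}\to\mathbb{F}_q^n$ ($n\ge s\ge2$) is an isometry if there is an $\mathbb{F}_q$-basis $(e_1,\dots,e_s)$ of $\mathbb{F}_{q^s}$ with trace-dual basis $(e'_1,\dots,e'_s)$ such that $\pi(e_i)\cdot\pi(e'_j)=\delta_{ij}$ for all $i,j$ (standard inner product on $\mathbb{F}_q^n$). $d_{\max\text{-}iso}(q;[n,s])$ is the largest $d$ such that some isometry $\pi:\mathbb{F}_{q^s}\to\mathbb{F}_q^n$ has image $\pi(\mathbb{F}_{q^s})$ (an $[n,s]_q$ code) of minimum distance $d$. The map $\pi^{\otimes 2N}:\mathbb{F}_{q^s}^{2N}\to\mathbb{F}_q^{2Nn}$ is $(c_1,\dots,c_{2N})\mapsto(\pi(c_1),\dots,\pi(c_{2N}))$. *)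

From HB Require Import structures.
From mathcomp Require Import all_boot all_order all_algebra all_field.
Set Implicit Arguments. Unset Strict Implicit. Unset Printing Implicit Defensive.
Import Order.TTheory GRing.Theory Num.Theory.
Local Open Scope ring_scope.

Definition wt (R : nmodType) (k : nat) (v : 'rV[R]_k) : nat :=
  #|[pred i : 'I_k | v 0 i != 0]|.

Definition is_min_dist (R : zmodType) (k : nat) (C : 'rV[R]_k -> Prop) (d : nat) : Prop :=
  (exists c1 c2, [/\ C c1, C c2, c1 != c2 & wt (c1 - c2) = d]) /\
  (forall c1 c2, C c1 -> C c2 -> c1 != c2 -> (d <= wt (c1 - c2))%N).

Definition dotv (R : pzRingType) (k : nat) (u v : 'rV[R]_k) : R :=
  \sum_(i < k) u 0 i * v 0 i.

Definition is_linear_code_dim (K : fieldType) (l : nat) (C : 'rV[K]_l -> Prop) (k : nat) : Prop :=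
  exists M : 'M[K]_(k, l), row_free M /\ forall v, C v <-> (v <= M)%MS.

Definition is_LCD (R : pzRingType) (l : nat) (C : 'rV[R]_l -> Prop) : Prop :=
  forall v, C v -> (forall w, C w -> dotv v w = 0) -> v = 0.

(* Trace of L = F_{q^s} over F = F_q : x + x^q + ... + x^(q^(s-1)). *)
Definition trF (F : finFieldType) (L : fieldExtType F) (x : L) : L :=
  \sum_(i < \dim {:L}) x ^+ (#|F| ^ i).

Definition is_isometry (F : finFieldType) (L : fieldExtType F) (n : nat)
    (pi : {linear L -> 'rV[F]_n}) : Prop :=
  exists e e' : (\dim {:L}).-tuple L,
    [/\ basis_of fullv e,
        (forall i j, trF (tnth e i * tnth e' j) = (i == j)%:R) &
        (forall i j, dotv (pi (tnth e i)) (pi (tnth e' j)) = (i == j)%:R)].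
Arguments is_isometry {F L n} pi.

Definition image_code (F : finFieldType) (L : fieldExtType F) (n : nat)
    (pi : {linear L -> 'rV[F]_n}) : 'rV[F]_n -> Prop :=
  fun v => exists x, v = pi x.

Definition is_dmax_iso (F : finFieldType) (L : fieldExtType F) (n d : nat) : Prop :=
  (exists pi : {linear L -> 'rV[F]_n}, is_isometry pi /\ is_min_dist (image_code pi) d) /\
  (forall (pi : {linear L -> 'rV[F]_n}) d', is_isometry pi ->
      is_min_dist (image_code pi) d' -> (d' <= d)%N).
Arguments is_dmax_iso {F} L n d.

Definition tridiag (K : pzRingType) (N : nat) (a b : K) : 'M[K]_N :=
  \matrix_(i, j) (if i == j then a
                  else if ((i.+1 == j) || (j.+1 == i))%N then b else 0).

Definition hatC (K : pzRingType) (N : nat) (a b : K) : 'rV[K]_(N + N) -> Prop :=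
  fun c => exists u : 'rV[K]_N, c = u *m row_mx 1%:M (tridiag N a b).
Arguments hatC {K} N a b _.

Definition pi_tensor (F : finFieldType) (L : fieldExtType F) (n l : nat)
    (pi : {linear L -> 'rV[F]_n}) (c : 'rV[L]_l) : 'rV[F]_(l * n) :=
  mxvec (\matrix_(i < l) pi (c 0 i)).

Definition image_tensor_code (F : finFieldType) (L : fieldExtType F) (n N : nat)
    (pi : {linear L -> 'rV[F]_n}) (a b : L) : 'rV[F]_((N + N) * n) -> Prop :=
  fun v => exists c, hatC N a b c /\ v = pi_tensor pi c.
Arguments image_tensor_code {F L n} N pi a b _.

Definition notin_S1 (E : fieldType) (m : nat) (theta mu b x : E) : Prop :=
  forall i : nat, (1 <= i <= m)%N ->
    x != - mu / b + theta ^+ i + theta ^- i /\ x != mu / b + theta ^+ i + theta ^- i.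

Definition notin_S2 (E : fieldType) (mu b x : E) : Prop :=
  x \notin [:: - mu / b + 2; - mu / b - 2; mu / b + 2; mu / b - 2].

From HB Require Import structures.
From mathcomp Require Import all_boot all_order all_algebra all_field.
From mathcomp Require Import ring zify.
From Stdlib Require Import Classical.
Set Implicit Arguments. Unset Strict Implicit. Unset Printing Implicit Defensive.
Import Order.TTheory GRing.Theory Num.Theory.
Local Open Scope ring_scope.

(* Let U_k be the Chebyshev-type polynomials U_0 = 1, U_1 = x,
   U_{k+2} = x U_{k+1} - U_k.  Working with the 2x2 companion matrix A of
   X^2 - xX + 1 (a substitute for its roots) and the Frobenius map, we first show
   U_N = (x^2 - 4)^((p^r-1)/2) U_m^(p^r) when N + 1 = p^r (m + 1), and that the
   roots of U_m are the theta^i + theta^-i; so U_N((a +- mu)/b) != 0 whenever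
   a/b avoids the excluded sets S_1, S_2.  Next, a vector in the left kernel of the
   tridiagonal T_N(al, be) solves a three-term recurrence and vanishes as soon as
   U_N(al/be) != 0.  Since hat C_N(a, b) has generator G = [I | T] with Gram matrix
   I + T^2 = (T + mu)(T - mu), it is LCD over F_{q^s}.  Finally an isometry pi
   transports the trace form of F_{q^s} to the standard inner product of F_q^n;
   hence pi^{(x) l} maps L-linear LCD codes to LCD codes, a rank k generator to a
   rank sk one, and multiplies weights by at least d. *)

(* U_k(x), the Chebyshev polynomial of the second kind evaluated at x/2. *)
Fixpoint cheb (R : pzRingType) (x : R) (k : nat) : R :=
  match k with
  | 0 => 1
  | 1 => x
  | (k'.+1 as k1).+1 => x * cheb x k1 - cheb x k'
  end.

Lemma chebSS (R : pzRingType) (x : R) k : cheb x k.+2 = x * cheb x k.+1 - cheb x k.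
Proof. by []. Qed.

(* The double root 2 of X^2 - xX + 1 at x = 2 gives U_k(2) = k + 1. *)
Lemma cheb_two (R : comPzRingType) k : cheb (2 : R) k = k.+1%:R.
Proof.
suff: cheb (2 : R) k = k.+1%:R /\ cheb (2 : R) k.+1 = k.+2%:R by case.
elim: k => [|k [IH1 IH2]]; first by split=> //=; rewrite mulr1n.
by split=> //; rewrite chebSS IH1 IH2 -[k.+3]addn3 -[k.+2]addn2 -[k.+1]addn1 !natrD; ring.
Qed.

(* Likewise at the double root -1 for x = -2: U_k(-2) = (-1)^k (k + 1). *)
Lemma cheb_Ntwo (R : comPzRingType) k : cheb (- 2 : R) k = (-1) ^+ k * k.+1%:R.
Proof.
suff: cheb (- 2 : R) k = (-1) ^+ k * k.+1%:R /\
      cheb (- 2 : R) k.+1 = (-1) ^+ k.+1 * k.+2%:R by case.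
elim: k => [|k [IH1 IH2]]; first by split=> //=; rewrite ?mul1r ?mulr1n ?expr1 ?mulN1r.
split=> //; rewrite chebSS IH1 IH2 !exprS -[k.+3]addn3 -[k.+2]addn2 -[k.+1]addn1 !natrD.
ring.
Qed.

(* Frobenius in characteristic p, for an element commuting with 1 in any ring. *)
Lemma exp_sub1_pchar (R : nzRingType) p r (z : R) : p \in [pchar R] ->
  (z - 1) ^+ (p ^ r) = z ^+ (p ^ r) - 1.
Proof.
move=> pc; elim: r => [|r IH]; first by rewrite !expr1.
rewrite expnSr !exprM IH -!(pFrobenius_autE pc) pFrobenius_autB_comm ?pFrobenius_aut1 //.
exact: commr1.
Qed.

Lemma two_neq0 (K : fieldType) p : p \in [pchar K] -> odd p -> (2 : K) != 0.
Proof.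
move=> pc odd_p; rewrite -(dvdn_pcharf pc); apply/negP=> p2.
have := prime_gt1 (pcharf_prime pc); have := dvdn_leq (isT : (0 < 2)%N) p2.
by case: p {pc p2} odd_p => [|[|[|]]].
Qed.

Lemma root_unity_neq0 (K : fieldType) k (th : K) : k.-primitive_root th -> th != 0.
Proof.
move=> prim; apply/eqP => th0; move: (prim_expr_order prim).
by rewrite th0 expr0n (gtn_eqF (prim_order_gt0 prim)) => /eqP; rewrite eq_sym oner_eq0.
Qed.

(* The companion matrix A of X^2 - xX + 1 stands in for a root of this polynomial:
   its inverse is B = x - A, and U_k(x) (A - B) = A^(k+1) - B^(k+1). *)
Section Companion.
Variables (K : fieldType) (x : K).

(* A = [[x, -1], [1, 0]]. *)
Definition companion : 'M[K]_2 := \matrix_(i, j)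
  (if (i : nat) == 0%N then (if (j : nat) == 0%N then x else -1)
   else (if (j : nat) == 0%N then 1 else 0)).

Definition companion_inv : 'M[K]_2 := x%:M - companion.

Local Notation A := companion.
Local Notation B := companion_inv.

Lemma scalar_comm (c : K) (M : 'M[K]_2) : GRing.comm c%:M M.
Proof. exact: comm_scalar_mx. Qed.

Lemma companion_sq : A * A = x%:M * A - 1.
Proof.
apply/matrixP=> i j; rewrite !(mxE, big_ord_recl, big_ord0) /=.
by case: i => [[|[|i]] Hi] //; case: j => [[|[|j]] Hj] //=; rewrite ?mulr1n ?mulr0n; ring.
Qed.

Lemma companion_mul_inv : A * B = 1.
Proof.
by rewrite /companion_inv mulrBr companion_sq -(scalar_comm x A) opprB addrCA subrr addr0.
Qed.

Lemma companion_inv_mul : B * A = 1.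
Proof. by rewrite /companion_inv mulrBl companion_sq opprB addrCA subrr addr0. Qed.

Lemma companion_comm_inv : GRing.comm A B.
Proof. by rewrite /GRing.comm companion_mul_inv companion_inv_mul. Qed.

Lemma cheb_companion k : (A - B) * (cheb x k)%:M = A ^+ k.+1 - B ^+ k.+1.
Proof.
suff: (A - B) * (cheb x k)%:M = A ^+ k.+1 - B ^+ k.+1 /\
      (A - B) * (cheb x k.+1)%:M = A ^+ k.+2 - B ^+ k.+2 by case.
have XAB : x%:M = A + B by rewrite /companion_inv addrC subrK.
elim: k => [|k [IH1 IH2]].
  split; first by rewrite /= mulr1 !expr1.
  rewrite /= XAB mulrBl [A * _]mulrDr [B * (A + B)]mulrDr -!expr2 companion_comm_inv.
  by rewrite opprD addrA addrK.
split=> //.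
rewrite chebSS rmorphB rmorphM /= mulrBr mulrA -(scalar_comm x (A - B)) -mulrA IH2 IH1 XAB.
rewrite [A ^+ k.+3]exprS [A ^+ k.+2]exprS [B ^+ k.+3]exprS [B ^+ k.+2]exprS.
rewrite mulrDl [A * (_ - _)]mulrBr [B * (_ - _)]mulrBr.
rewrite [A * (B * _)]mulrA companion_mul_inv mul1r [B * (A * _)]mulrA companion_inv_mul mul1r.
by rewrite opprB addrACA subrK addrAC subrr add0r.
Qed.

Lemma cheb_companion_pow k :
  A ^+ k.+1 * ((A - B) * (cheb x k)%:M) = A ^+ (k.+1 + k.+1) - 1.
Proof.
rewrite cheb_companion mulrBr -exprD -(exprMn_comm _ companion_comm_inv).
by rewrite companion_mul_inv expr1n.
Qed.

Lemma companion_diff_sq : (A - B) ^+ 2 = (x ^+ 2 - 4)%:M.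
Proof.
apply/matrixP=> i j; rewrite !(mxE, big_ord_recl, big_ord0) /=.
by case: i => [[|[|i]] Hi] //; case: j => [[|[|j]] Hj] //=; rewrite ?mulr1n ?mulr0n; ring.
Qed.

Lemma companion_diff10 : (A - B) 1 0 = 2.
Proof. by rewrite !mxE /= mulr0n; ring. Qed.

Lemma det_companion_sub c : \det (A - c%:M) = c ^+ 2 - x * c + 1.
Proof.
rewrite (expand_det_row _ 0) !big_ord_recl big_ord0 /cofactor !det_mx11 !mxE /=.
rewrite ?mulr1n ?mulr0n; ring.
Qed.

End Companion.

(* Splitting off the p-part of N + 1 with the Frobenius map:
   for N + 1 = p^r (m + 1) in odd characteristic p,
   U_N = (x^2 - 4)^((p^r - 1)/2) U_m^(p^r). *)
Section ChebFrobenius.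
Variables (K : fieldType) (p r m N : nat) (x : K).
Hypotheses (pc : p \in [pchar K]) (odd_p : odd p) (HN : N.+1 = (p ^ r * m.+1)%N).

Local Notation q := (p ^ r)%N.
Local Notation A := (companion x).
Local Notation B := (companion_inv x).
Local Notation D := (companion x - companion_inv x).

(* Both sides become A^(2(N+1)) - 1 = (A^(2(m+1)) - 1)^q after multiplying by A^(N+1). *)
Lemma companion_diff_frobenius : D * (cheb x N)%:M = D ^+ q * (cheb x m ^+ q)%:M.
Proof.
have cAD k : GRing.comm (A ^+ k) (D * (cheb x m)%:M).
  rewrite cheb_companion; apply/commr_sym/commrX/commr_sym.
  by apply: commrB; [exact: commrX | exact/commrX/companion_comm_inv].
have cBA : GRing.comm B A := commr_sym (@companion_comm_inv K x).
have BA : B ^+ N.+1 * A ^+ N.+1 = 1.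
  by rewrite -(exprMn_comm _ cBA) companion_inv_mul expr1n.
suff E : A ^+ N.+1 * (D * (cheb x N)%:M) = A ^+ N.+1 * (D ^+ q * (cheb x m ^+ q)%:M).
  by rewrite -[LHS]mul1r -BA -mulrA E mulrA BA mul1r.
have E2 : (N.+1 + N.+1 = (m.+1 + m.+1) * q)%N by rewrite HN -mulnDr mulnC.
have pcM : p \in [pchar 'M[K]_2] := rmorph_pchar (@scalar_mx K 2) pc.
rewrite cheb_companion_pow E2 exprM -(exp_sub1_pchar _ _ pcM).
rewrite -cheb_companion_pow exprMn_comm ?cAD // -exprM mulnC -HN.
by rewrite exprMn_comm ?rmorphXn //; apply/commr_sym/scalar_comm.
Qed.

(* Reading off the entry (1, 0), where A - B has the invertible entry 2. *)
Lemma cheb_frobenius : cheb x N = (x ^+ 2 - 4) ^+ q./2 * cheb x m ^+ q.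
Proof.
have odd_q : odd q by rewrite oddX odd_p orbT.
have Dq : D ^+ q = D * ((x ^+ 2 - 4) ^+ q./2)%:M.
  rewrite -{1}(odd_double_half q) odd_q add1n exprS -muln2 mulnC exprM.
  by rewrite companion_diff_sq rmorphXn.
have := companion_diff_frobenius; rewrite Dq -mulrA -rmorphM /=.
move/(congr1 (fun M : 'M[K]_2 => M 1 0)); rewrite -!mulmxE !mul_mx_scalar.
have entry c : (c *: D) 1 0 = 2 * c by rewrite mxE companion_diff10 mulrC.
by rewrite !entry => /(mulfI (two_neq0 pc odd_p)).
Qed.
End ChebFrobenius.

(* The roots of U_m: if U_m(x) = 0 then A^(2(m+1)) = 1, so some factor A - theta^j
   of X^(2(m+1)) - 1 evaluated at A is singular, i.e. x = theta^j + theta^-j. *)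
Lemma cheb_root (K : fieldType) m (x th : K) :
  (2 * m.+1)%N.-primitive_root th -> cheb x m = 0 ->
  exists2 j, (j < 2 * m.+1)%N & x = th ^+ j + th ^- j.
Proof.
move=> prim Um0.
have Aroot : companion x ^+ (2 * m.+1) = 1.
  apply/eqP; rewrite -subr_eq0 mul2n -addnn -cheb_companion_pow Um0.
  by rewrite rmorph0 !mulr0.
have := congr1 (horner_mx (companion x)) (factor_Xn_sub_1 prim).
rewrite rmorph_prod rmorphB /= rmorph1 rmorphXn /= horner_mx_X Aroot subrr.
move/(congr1 determinant); rewrite det0 (big_morph _ (@det_mulmx K 2) (@det1 K 2)).
move/eqP; rewrite prodf_seq_eq0 => /hasP[j]; rewrite mem_index_iota => /andP[_ ltj].
rewrite rmorphB /= horner_mx_X horner_mx_C det_companion_sub => /eqP Hj.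
exists j => //.
have thj_neq0 : th ^+ j != 0 by rewrite expf_neq0 // (root_unity_neq0 prim).
apply: (mulIf thj_neq0); rewrite mulrDl mulVf // -[RHS]subr0 -Hj; ring.
Qed.

(* All roots of U_N: +-2 (only when p | N + 1) and theta^i + theta^-i for
   1 <= i <= m; the roots 2, -2 of U_m are excluded since U_m(+-2) = +-(m + 1). *)
Lemma cheb_roots (K : fieldType) p r m N (x th : K) :
  p \in [pchar K] -> odd p -> N.+1 = (p ^ r * m.+1)%N -> ~~ (p %| m.+1)%N ->
  (2 * m.+1)%N.-primitive_root th -> cheb x N = 0 ->
  ((1 <= r)%N /\ (x = 2 \/ x = - 2)) \/
  (exists i, (1 <= i <= m)%N /\ x = th ^+ i + th ^- i).
Proof.
move=> pc odd_p HN ndvd prim.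
rewrite (cheb_frobenius x pc odd_p HN) => /eqP; rewrite mulf_eq0 !expf_eq0.
case/orP=> [/andP[q_gt1 /eqP x2]|/andP[_ /eqP Um0]].
  left; split; first by case: r HN q_gt1 => [|r]; rewrite ?expn0.
  have : (x - 2) * (x + 2) = 0 by rewrite -x2; ring.
  move/eqP; rewrite mulf_eq0 subr_eq0 addr_eq0 => /orP[] /eqP ->; by [left | right].
right; have [j ltj xE] := cheb_root prim Um0; rewrite {}xE in Um0 *.
have th_neq0 := root_unity_neq0 prim.
have m1_neq0 : (m.+1%:R : K) != 0 by rewrite -(dvdn_pcharf pc).
have thm : th ^+ m.+1 = -1.
  have : (th ^+ m.+1) ^+ 2 == 1 by rewrite -exprM mulnC (prim_expr_order prim).
  rewrite sqrf_eq1 => /orP[th1|/eqP //].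
  have := dvdn_leq (ltn0Sn _) (etrans (prim_order_dvd prim m.+1) th1).
  by rewrite leqNgt mul2n -addnn -{1}[m.+1]add0n ltn_add2r.
have [j0|j_gt0] := posnP j.
  by move: Um0; rewrite j0 expr0 invr1 cheb_two; move/eqP; rewrite (negbTE m1_neq0).
case: (ltngtP j m.+1) => [ltjm|gtjm|jm].
- by exists j; rewrite j_gt0 -ltnS ltjm.
- exists (2 * m.+1 - j)%N; split; first by apply/andP; split; lia.
  have thjV : th ^+ (2 * m.+1 - j) = th ^- j.
    apply: (mulIf (expf_neq0 j th_neq0)); rewrite mulVf ?expf_neq0 //.
    by rewrite -exprD subnK ?(prim_expr_order prim) // ltnW.
  by rewrite thjV invrK addrC.
- move: Um0; rewrite jm thm invrN invr1 -opprD cheb_Ntwo => /eqP.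
  by rewrite mulf_eq0 (negbTE m1_neq0) orbF expf_eq0 oppr_eq0 oner_eq0 andbF.
Qed.

Lemma cheb_shift_neq0 (K : fieldType) p r m N (x c th : K) :
  p \in [pchar K] -> odd p -> N.+1 = (p ^ r * m.+1)%N -> ~~ (p %| m.+1)%N ->
  (2 * m.+1)%N.-primitive_root th ->
  (forall i, (1 <= i <= m)%N -> x != c + th ^+ i + th ^- i) ->
  ((1 <= r)%N -> x != c + 2 /\ x != c - 2) ->
  cheb (x - c) N != 0.
Proof.
move=> pc odd_p HN ndvd prim S1 S2; apply/eqP => /(cheb_roots pc odd_p HN ndvd prim).
have xE : x = c + (x - c) by rewrite addrC subrK.
case=> [[r_gt0 [] xc]|[i [hi xc]]]; rewrite xE xc ?addrA in S1 S2.
- by case: (S2 r_gt0); rewrite eqxx.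
- by case: (S2 r_gt0); rewrite eqxx.
- by move: (S1 i hi); rewrite eqxx.
Qed.

(* The excluded sets S_1, S_2 (shifts c = -+ mu/z) are exactly what keeps
   U_N((y +- mu)/z) away from zero. *)
Lemma cheb_excluded_neq0 (K : fieldType) p r m N (th mu eps y z : K) :
  p \in [pchar K] -> odd p -> N.+1 = (p ^ r * m.+1)%N -> ~~ (p %| m.+1)%N ->
  (2 * m.+1)%N.-primitive_root th -> z != 0 -> eps = mu \/ eps = - mu ->
  notin_S1 m th mu z (y / z) -> ((1 <= r)%N -> notin_S2 mu z (y / z)) ->
  cheb ((y + eps) / z) N != 0.
Proof.
move=> pc odd_p HN ndvd prim z_neq0 eps_pm S1 S2.
have -> : (y + eps) / z = y / z - (- eps / z) by rewrite mulNr opprK mulrDl.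
apply: (cheb_shift_neq0 pc odd_p HN ndvd prim) => [i /S1[]|/S2].
  by case: eps_pm => -> //; rewrite opprK.
rewrite /notin_S2 !inE !negb_or => /and4P[? ? ? ?].
by case: eps_pm => ->; rewrite ?opprK.
Qed.

Lemma three_term_cheb (K : fieldType) (al be : K) (f : nat -> K) n :
  be != 0 -> al * f 0%N + be * f 1%N = 0 ->
  (forall j, (j.+2 <= n)%N -> be * f j + al * f j.+1 + be * f j.+2 = 0) ->
  forall k, (k <= n)%N -> (-1) ^+ k * f k = f 0%N * cheb (al / be) k.
Proof.
move=> be_neq0 f01 fS.
suff H k : (k.+1 <= n)%N -> (-1) ^+ k * f k = f 0%N * cheb (al / be) k /\
                           (-1) ^+ k.+1 * f k.+1 = f 0%N * cheb (al / be) k.+1.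
  by move=> [|k] kn; [rewrite mul1r mulr1 | case: (H k kn)].
elim: k => [|k IH] kn.
  split; first by rewrite mul1r mulr1.
  have -> : f 1%N = - (al * f 0%N) / be.
    apply: (mulfI be_neq0); rewrite mulrCA divff // mulr1.
    by apply/eqP; rewrite -addr_eq0 addrC f01.
  by rewrite /= expr1; field.
have [IH1 IH2] := IH (ltnW kn); split=> //.
have -> : f k.+2 = - (be * f k + al * f k.+1) / be.
  apply: (mulfI be_neq0); rewrite mulrCA divff // mulr1.
  by apply/eqP; rewrite -addr_eq0 addrC (fS k kn).
by rewrite chebSS mulrBr [f 0%N * (_ * _)]mulrCA -IH2 -IH1 !exprS; field.
Qed.

Definition ext0 (R : pzSemiRingType) N (u : 'rV[R]_N) (k : nat) : R :=
  \sum_(i < N) u 0 i * (i == k :> nat)%:R.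

Lemma ext0_ord (R : pzSemiRingType) N (u : 'rV[R]_N) (i : 'I_N) : ext0 u i = u 0 i.
Proof.
rewrite /ext0 (bigD1 i) //= eqxx mulr1 big1 ?addr0 // => j /negbTE.
by rewrite -val_eqE /= => ->; rewrite mulr0.
Qed.

Lemma ext0_out (R : pzSemiRingType) N (u : 'rV[R]_N) k : (N <= k)%N -> ext0 u k = 0.
Proof.
move=> Nk; rewrite /ext0 big1 // => i _.
by rewrite ltn_eqF ?mulr0 // (leq_trans (ltn_ord i)).
Qed.

(* Entry j of u T_N(al, be) is be u_{j-1} + al u_j + be u_{j+1}. *)
Lemma tridiag_entry (R : comPzRingType) N (al be : R) (u : 'rV[R]_N) (j : 'I_N) :
  (u *m tridiag N al be) 0 j =
  be * \sum_(i < N) u 0 i * (i.+1 == j :> nat)%:R + al * ext0 u j + be * ext0 u j.+1.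
Proof.
rewrite mxE /ext0 !mulr_sumr -!big_split /=; apply: eq_bigr => i _.
rewrite mxE -val_eqE /= [(i : nat) == j.+1]eq_sym.
case: eqP => [e1|n1]; case: eqP => [e2|n2]; case: eqP => [e3|n3] /=; try lia;
  rewrite ?mulr1 ?mulr0 ?addr0 ?add0r ?mulr1n ?mulr0n; ring.
Qed.

(* T_N(al, be) has trivial left kernel when U_N(al/be) != 0: a kernel vector
   solves the three-term recurrence and has to vanish at index N. *)
Lemma tridiag_ker (K : fieldType) N (al be : K) (u : 'rV[K]_N) :
  be != 0 -> cheb (al / be) N != 0 -> u *m tridiag N al be = 0 -> u = 0.
Proof.
move=> be_neq0 U_neq0 uT0.
have rec j (jN : (j < N)%N) : be * \sum_(i < N) u 0 i * (i.+1 == j :> nat)%:R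
    + al * ext0 u j + be * ext0 u j.+1 = 0.
  by rewrite -(tridiag_entry al be u (Ordinal jN)) uT0 mxE.
have [N0|N_gt0] := posnP N; first by move: u {uT0 rec}; rewrite N0 => u; rewrite thinmx0.
have f01 : al * ext0 u 0 + be * ext0 u 1 = 0.
  by have := rec 0%N N_gt0; rewrite big1 ?mulr0 ?add0r // => i _; rewrite mulr0.
have fS j : (j.+2 <= N)%N -> be * ext0 u j + al * ext0 u j.+1 + be * ext0 u j.+2 = 0.
  exact: rec.
have sol := three_term_cheb be_neq0 f01 fS.
have u00 : ext0 u 0 = 0.
  apply/eqP; move: (sol N (leqnn N)); rewrite ext0_out // mulr0 => /esym/eqP.
  by rewrite mulf_eq0 (negbTE U_neq0) orbF.
apply/rowP => i; rewrite mxE -ext0_ord; apply/eqP.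
move: (sol i (ltnW (ltn_ord i))); rewrite u00 mul0r => /eqP.
by rewrite mulf_eq0 expf_eq0 oppr_eq0 oner_eq0 andbF.
Qed.

Lemma dotvE (R : comPzRingType) k (x y : 'rV[R]_k) : dotv x y = (x *m y^T) 0 0.
Proof. by rewrite /dotv mxE; apply: eq_bigr => i _; rewrite mxE. Qed.

Lemma tridiag_tr (R : pzRingType) N (a b : R) : (tridiag N a b)^T = tridiag N a b.
Proof. by apply/matrixP => i j; rewrite !mxE eq_sym orbC. Qed.

Lemma map_tridiag (R S : pzRingType) (f : {rmorphism R -> S}) N (a b : R) :
  map_mx f (tridiag N a b) = tridiag N (f a) (f b).
Proof.
apply/matrixP => i j; rewrite !mxE.
by case: (i == j) => //; case: (_ || _) => //; rewrite rmorph0.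
Qed.

Lemma tridiag_add_scalar (R : pzRingType) N (a b c : R) :
  tridiag N a b + c%:M = tridiag N (a + c) b.
Proof.
apply/matrixP => i j; rewrite !mxE.
by case: (i == j) => /=; rewrite ?mulr1n ?mulr0n ?addr0.
Qed.

Lemma hatC_gram (R : comPzRingType) N (a b : R) :
  let G := row_mx 1%:M (tridiag N a b) in
  G *m G^T = 1%:M + tridiag N a b *m tridiag N a b.
Proof. by rewrite /= tr_row_mx mul_row_col trmx1 mul1mx tridiag_tr. Qed.

(* hat C_N(a, b) is LCD as soon as U_N((a +- mu)/b) != 0 in some extension E
   containing a square root mu of -1: then I + T^2 = (T + mu)(T - mu) is
   injective on row vectors. *)
Lemma hatC_LCD (L E : fieldType) (iota : {rmorphism L -> E}) N (a b : L) (mu : E) :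
  b != 0 -> mu ^+ 2 = -1 ->
  cheb ((iota a + mu) / iota b) N != 0 -> cheb ((iota a - mu) / iota b) N != 0 ->
  is_LCD (hatC N a b).
Proof.
move=> b_neq0 mu2 U_plus U_minus _ [u ->] orth.
suff -> : u = 0 by rewrite mul0mx.
set T := tridiag N a b.
have uGram : u *m (1%:M + T *m T) = 0.
  apply/rowP => k; have := orth _ (ex_intro _ (delta_mx 0 k) erefl).
  rewrite dotvE trmx_mul mulmxA -(mulmxA u) hatC_gram trmx_delta -colE.
  by rewrite [col _ _ _ _]mxE => ->; rewrite mxE.
have ib_neq0 : iota b != 0 by rewrite fmorph_eq0.
set TE := tridiag N (iota a) (iota b).
have factor : 1%:M + TE *m TE = (TE + mu%:M) *m (TE - mu%:M).
  rewrite mulmxDl !mulmxBr mul_mx_scalar mul_scalar_mx -scalar_mxM -expr2 mu2.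
  by rewrite addrC addrA subrK rmorphN opprK.
have := congr1 (map_mx iota) uGram.
rewrite map_mx0 map_mxM map_mxD map_mx1 map_mxM map_tridiag factor mulmxA.
rewrite tridiag_add_scalar -rmorphN tridiag_add_scalar.
move/(tridiag_ker ib_neq0 U_minus)/(tridiag_ker ib_neq0 U_plus)/eqP.
by rewrite map_mx_eq0 => /eqP.
Qed.

Lemma row_free_systematic (K : fieldType) k l (T : 'M[K]_(k, l)) :
  row_free (row_mx 1%:M T).
Proof.
apply/inj_row_free => u; rewrite mul_mx_row mulmx1 => /eqP.
by rewrite row_mx_eq0 => /andP[/eqP].
Qed.

Section Trace.
Variables (F : finFieldType) (L : fieldExtType F).

Lemma dim_fullv_gt0 : (0 < \dim {:L})%N.
Proof. exact: adim_gt0. Qed.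

(* |F|^i is a power of the characteristic of L, so x |-> x^(|F|^i) is additive. *)
Lemma card_pchar_nat i : [pchar L].-nat (#|F| ^ i)%N.
Proof.
have [p p_pr pc] := finPcharP F.
rewrite (eq_pnat _ (pcharf_eq (rmorph_pchar (in_alg L) pc))) (card_pprimeChar pc).
by rewrite -expnM pnatX pnat_id.
Qed.

(* Additivity and F-homogeneity of the trace (c^(|F|^i) = c for c in F). *)
Lemma trFD (x y : L) : trF (x + y) = trF x + trF y.
Proof.
rewrite /trF -big_split; apply: eq_bigr => i _.
by rewrite exprDn_pchar ?card_pchar_nat.
Qed.

Lemma trF0 : trF (0 : L) = 0.
Proof. by apply: (addrI (trF 0)); rewrite -trFD !addr0. Qed.

Lemma trF_sum I (r : seq I) (P : pred I) (f : I -> L) :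
  trF (\sum_(i <- r | P i) f i) = \sum_(i <- r | P i) trF (f i).
Proof. exact: (big_morph _ trFD trF0). Qed.

Lemma trFZ (c : F) (x : L) : trF (c *: x) = c *: trF x.
Proof.
have c_fixed i : c ^+ (#|F| ^ i)%N = c.
  by elim: i => [|i IH]; rewrite ?expr1 // expnSr exprM IH expf_card.
by rewrite /trF scaler_sumr; apply: eq_bigr => i _; rewrite exprZn c_fixed.
Qed.
End Trace.

Lemma dotvC (R : comPzRingType) k (v w : 'rV[R]_k) : dotv v w = dotv w v.
Proof. by apply: eq_bigr => i _; rewrite mulrC. Qed.

Lemma dotv_sumZl (R : comPzRingType) k m (c : 'I_m -> R) (v : 'I_m -> 'rV[R]_k) w :
  dotv (\sum_i c i *: v i) w = \sum_i c i * dotv (v i) w.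
Proof.
rewrite /dotv; under eq_bigr => j _ do rewrite summxE mulr_suml.
rewrite exchange_big; apply: eq_bigr => i _; rewrite mulr_sumr.
by apply: eq_bigr => j _; rewrite mxE mulrA.
Qed.

Lemma dotv_sumZr (R : comPzRingType) k m (c : 'I_m -> R) (v : 'I_m -> 'rV[R]_k) w :
  dotv w (\sum_i c i *: v i) = \sum_i c i * dotv w (v i).
Proof. by rewrite dotvC dotv_sumZl; apply: eq_bigr => i _; rewrite dotvC. Qed.

Lemma sum_kronecker (R : pzSemiRingType) m (f : 'I_m -> R) i :
  \sum_(j < m) f j * (j == i)%:R = f i.
Proof.
rewrite (bigD1 i) //= eqxx mulr1 big1 ?addr0 // => j /negbTE ->.
by rewrite mulr0.
Qed.

Lemma sum_kroneckerZ (K : fieldType) (A : lalgType K) m (f : 'I_m -> K) i :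
  \sum_(j < m) f j *: ((j == i)%:R : A) = (f i)%:A.
Proof.
rewrite (bigD1 i) //= eqxx big1 ?addr0 // => j /negbTE ->.
by rewrite scaler0.
Qed.

Section Isometry.
Variables (F : finFieldType) (L : fieldExtType F) (n : nat) (pi : {linear L -> 'rV[F]_n}).
Variables (e e' : (\dim {:L}).-tuple L).
Hypotheses (e_basis : basis_of fullv e)
  (e_dual : forall i j, trF (tnth e i * tnth e' j) = (i == j)%:R)
  (pi_dual : forall i j, dotv (pi (tnth e i)) (pi (tnth e' j)) = (i == j)%:R).

Lemma pi_sum m (c : 'I_m -> F) (w : 'I_m -> L) :
  pi (\sum_i c i *: w i) = \sum_i c i *: pi (w i).
Proof. by rewrite linear_sum; apply: eq_bigr => i _; rewrite linearZ. Qed.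

Lemma expand_basis (X : (\dim {:L}).-tuple L) x :
  basis_of fullv X -> x = \sum_i coord X i x *: tnth X i.
Proof.
move=> X_basis; rewrite {1}(coord_basis X_basis (memvf x)).
by apply: eq_bigr => i _; rewrite (tnth_nth 0).
Qed.

Lemma dotv_dual x i : dotv (pi x) (pi (tnth e' i)) = coord e i x.
Proof.
rewrite {1}(expand_basis x e_basis) pi_sum dotv_sumZl.
by under eq_bigr => j _ do rewrite pi_dual; rewrite sum_kronecker.
Qed.

Lemma pi_kernel x : pi x = 0 -> x = 0.
Proof.
move=> pix0; rewrite (expand_basis x e_basis); apply: big1 => i _.
by rewrite -dotv_dual pix0 /dotv big1 ?scale0r // => j _; rewrite mxE mul0r.
Qed.

(* The trace-dual family e' is again a basis: pairing a relation
   sum_j k_j e'_j = 0 with e_i under the trace gives k_i = 0. *)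
Lemma dual_basis : basis_of fullv e'.
Proof.
rewrite basisEfree subvf size_tuple leqnn andbT andbT.
apply/freeP => k sum0 i.
have : trF ((\sum_j k j *: e'`_j) * tnth e i) = 0 by rewrite sum0 mul0r trF0.
rewrite mulr_suml trF_sum.
under eq_bigr => j _ do rewrite -scalerAl trFZ -(tnth_nth 0) mulrC e_dual eq_sym.
by rewrite sum_kroneckerZ => /eqP; rewrite scaler_eq0 oner_eq0 orbF => /eqP.
Qed.

Lemma trF_dotv x y : trF (x * y) = (dotv (pi x) (pi y))%:A.
Proof.
rewrite (expand_basis x e_basis) (expand_basis y dual_basis) mulr_suml trF_sum.
rewrite pi_sum dotv_sumZl scaler_suml; apply: eq_bigr => i _.
rewrite mulr_sumr trF_sum pi_sum dotv_sumZr mulr_sumr scaler_suml.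
apply: eq_bigr => j _; rewrite -scalerAl -scalerAr !trFZ e_dual pi_dual.
by rewrite scalerA -scaler_nat scalerA mulrA.
Qed.
End Isometry.

Lemma big_mxvec_index (R : Type) (idx : R) (op : Monoid.com_law idx) l m
    (G : 'I_(l * m) -> R) :
  \big[op/idx]_k G k = \big[op/idx]_(i < l) \big[op/idx]_(j < m) G (mxvec_index i j).
Proof.
have idx_inj : injective (fun ij : 'I_l * 'I_m => mxvec_index ij.1 ij.2).
  by move=> [i j] [i' j'] /= /cast_ord_inj /enum_rank_inj.
have card_le : (#|{: 'I_(l * m)}| <= #|{: 'I_l * 'I_m}|)%N by rewrite card_prod !card_ord.
rewrite (reindex _ (onW_bij _ (inj_card_bij idx_inj card_le))) pair_big /=.
by apply: eq_bigr => -[i j].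
Qed.

Lemma wt_sum (R : nmodType) k (v : 'rV[R]_k) : wt v = (\sum_i (v 0%R i != 0%R))%N.
Proof.
rewrite /wt -sum1_card big_mkcond; apply: eq_bigr => i _.
by rewrite inE; case: (_ != _).
Qed.

Lemma ex_least (P : nat -> Prop) k0 :
  P k0 -> exists k, P k /\ forall j, P j -> (k <= j)%N.
Proof.
elim/ltn_ind: k0 => k IH Pk.
have [[j [Pj ltjk]]|no_smaller] := classic (exists j, P j /\ (j < k)%N).
  exact: IH Pj.
exists k; split=> // j Pj; rewrite leqNgt; apply/negP => ltjk.
by apply: no_smaller; exists j.
Qed.

Section Tensor.
Variables (F : finFieldType) (L : fieldExtType F) (n : nat) (pi : {linear L -> 'rV[F]_n}).

Definition tensor_code l (C : 'rV[L]_l -> Prop) : 'rV[F]_(l * n) -> Prop :=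
  fun v => exists c, C c /\ v = pi_tensor pi c.

Lemma tensor_entry l (c : 'rV[L]_l) i j :
  pi_tensor pi c 0 (mxvec_index i j) = pi (c 0 i) 0 j.
Proof. by rewrite /pi_tensor mxvecE mxE. Qed.

Lemma wt_tensor l (c : 'rV[L]_l) : wt (pi_tensor pi c) = (\sum_i wt (pi (c 0%R i)))%N.
Proof.
rewrite wt_sum (big_mxvec_index (Monoid.ComLaw.clone _ _ addn _)) /=.
by apply: eq_bigr => i _; rewrite wt_sum; apply: eq_bigr => j _; rewrite tensor_entry.
Qed.

Lemma dotv_tensor l (c c' : 'rV[L]_l) :
  dotv (pi_tensor pi c) (pi_tensor pi c') = \sum_i dotv (pi (c 0 i)) (pi (c' 0 i)).
Proof.
rewrite /dotv big_mxvec_index; apply: eq_bigr => i _.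
by apply: eq_bigr => j _; rewrite !tensor_entry.
Qed.

Lemma tensor_linear l (k : F) (c c' : 'rV[L]_l) :
  pi_tensor pi (k%:A *: c + c') = k *: pi_tensor pi c + pi_tensor pi c'.
Proof.
rewrite /pi_tensor -linearP; congr mxvec; apply/matrixP => i j.
by rewrite !mxE mulr_algl linearP /= !mxE.
Qed.

Lemma tensor_sub l (c c' : 'rV[L]_l) :
  pi_tensor pi (c - c') = pi_tensor pi c - pi_tensor pi c'.
Proof.
rewrite /pi_tensor -linearB; congr mxvec; apply/matrixP => i j.
by rewrite !mxE linearB /= !mxE.
Qed.

Lemma tensor0 l : pi_tensor pi (0 : 'rV[L]_l) = 0.
Proof. by rewrite -(subrr (0 : 'rV[L]_l)) tensor_sub subrr. Qed.

Lemma tensor_kernel l (c : 'rV[L]_l) :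
  (forall x, pi x = 0 -> x = 0) -> pi_tensor pi c = 0 -> c = 0.
Proof.
move=> pi_inj /eqP; rewrite mxvec_eq0 => /eqP M0.
apply/rowP => i; rewrite mxE; apply: pi_inj; apply/rowP => j.
by have := congr1 (fun M : 'M[F]_(l, n) => M i j) M0; rewrite !mxE.
Qed.

Lemma image_wt_ge d : (forall x, pi x = 0 -> x = 0) -> is_min_dist (image_code pi) d ->
  forall x, x != 0 -> (d <= wt (pi x))%N.
Proof.
move=> pi_inj [_ min_d] x x_neq0; rewrite -[pi x]subr0.
apply: min_d; [by exists x | by exists 0; rewrite linear0 |].
by apply: contra x_neq0 => /eqP /pi_inj ->.
Qed.

Lemma wt_tensor_ge d l (c : 'rV[L]_l) :
  (forall x, x != 0 -> (d <= wt (pi x))%N) -> (d * wt c <= wt (pi_tensor pi c))%N.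
Proof.
move=> wt_pi; rewrite wt_tensor wt_sum big_distrr /=; apply: leq_sum => i _.
by case: eqP => [_|/eqP ci_neq0]; rewrite ?muln0 ?muln1 // wt_pi.
Qed.

(* An isometry maps L-linear LCD codes to LCD codes: if c is orthogonal to
   pi^{(x) l}(C) but <c, c'> = z != 0, rescaling c' by lam = e_0 e'_0 / z gives
   1 = Tr(e_0 e'_0) = Tr(lam z) = <pi^{(x) l} c, pi^{(x) l}(lam c')> = 0. *)
Lemma tensor_LCD l (C : 'rV[L]_l -> Prop) :
  is_isometry pi -> (forall c (lam : L), C c -> C (lam *: c)) -> is_LCD C ->
  is_LCD (tensor_code C).
Proof.
case=> e [e' [e_basis e_dual pi_dual]] C_scal C_LCD _ [c [Cc ->]] orth.
suff -> : c = 0 by rewrite tensor0.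
apply: C_LCD => // c' Cc'; apply/eqP/negPn/negP => z_neq0.
pose i0 := Ordinal (dim_fullv_gt0 L).
pose lam := tnth e i0 * tnth e' i0 / dotv c c'.
have : trF (lam * dotv c c') = (dotv (pi_tensor pi c) (pi_tensor pi (lam *: c')))%:A.
  rewrite dotv_tensor /dotv mulr_sumr trF_sum scaler_suml; apply: eq_bigr => i _.
  by rewrite -(trF_dotv e_basis e_dual pi_dual) mxE mulrCA.
rewrite orth; last by exists (lam *: c'); split; [exact: C_scal|].
rewrite /lam mulfVK // e_dual eqxx scale0r => /eqP.
by rewrite oner_eq0.
Qed.

Lemma tensor_min_dist l (C : 'rV[L]_l -> Prop) d D :
  (forall x, pi x = 0 -> x = 0) -> (forall x, x != 0 -> (d <= wt (pi x))%N) ->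
  is_min_dist C D ->
  exists Dstar, is_min_dist (tensor_code C) Dstar /\ (d * D <= Dstar)%N.
Proof.
move=> pi_inj wt_pi [[c1 [c2 [Cc1 Cc2 c12 _]]] C_min].
have tensor_inj c c' : pi_tensor pi c = pi_tensor pi c' -> c = c'.
  move=> E; apply/eqP; rewrite -subr_eq0; apply/eqP/(tensor_kernel pi_inj).
  by rewrite tensor_sub E subrr.
pose Q k := exists v1 v2,
  [/\ tensor_code C v1, tensor_code C v2, v1 != v2 & wt (v1 - v2) = k].
have Q0 : Q (wt (pi_tensor pi c1 - pi_tensor pi c2)).
  exists (pi_tensor pi c1), (pi_tensor pi c2); split=> //; [by exists c1|by exists c2|].
  by apply: contra c12 => /eqP/tensor_inj ->.
have [k [Qk k_min]] := ex_least Q0.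
exists k; split; first by split=> // v1 v2 Cv1 Cv2 v12; apply: k_min; exists v1, v2.
have [_ [_ [[c [Cc ->]] [c' [Cc' ->]] cc' <-]]] := Qk.
rewrite -tensor_sub (leq_trans _ (wt_tensor_ge _ wt_pi)) // leq_mul2l C_min ?orbT //.
by apply: contra cc' => /eqP ->.
Qed.
End Tensor.

(* If G is a k x l generator of rank k over L, then pi^{(x) l}(row space of G) is
   the row space of the matrix of the injective F-linear map
   w |-> pi^{(x) l}(coords w * G), where coords reads w in F^(s k) as k
   coordinate vectors over the basis e; so it has dimension s k over F. *)
Section GeneratorMatrix.
Variables (F : finFieldType) (L : fieldExtType F) (n : nat) (pi : {linear L -> 'rV[F]_n}).
Variables (k l : nat) (G : 'M[L]_(k, l)) (e : (\dim {:L}).-tuple L).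
Hypotheses (G_free : row_free G) (e_basis : basis_of fullv e)
  (pi_inj : forall x, pi x = 0 -> x = 0).

Definition coords (w : 'rV[F]_(\dim {:L} * k)) : 'rV[L]_k :=
  \row_j \sum_i vec_mx w i j *: tnth e i.

Definition tensor_gen (w : 'rV[F]_(\dim {:L} * k)) : 'rV[F]_(l * n) :=
  pi_tensor pi (coords w *m G).

Lemma coordsP (c : F) w w' : coords (c *: w + w') = c%:A *: coords w + coords w'.
Proof.
apply/rowP => j; rewrite !mxE linearP /= mulr_sumr -big_split /=.
by apply: eq_bigr => i _; rewrite !mxE scalerDl -scalerA mulr_algl.
Qed.

Lemma tensor_gen_is_linear : linear tensor_gen.
Proof. by move=> c w w'; rewrite /tensor_gen coordsP mulmxDl -scalemxAl tensor_linear. Qed.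

HB.instance Definition _ :=
  GRing.isLinear.Build F _ _ _ tensor_gen tensor_gen_is_linear.

(* tensor_gen is injective: G has full row rank and e is free. *)
Lemma tensor_gen_kernel w : tensor_gen w = 0 -> w = 0.
Proof.
move/(tensor_kernel pi_inj)/eqP; rewrite (mulmx_free_eq0 _ G_free) => /eqP cw0.
rewrite -(vec_mxK w) (_ : vec_mx w = 0) ?linear0 //; apply/matrixP => i j.
move/freeP: (basis_free e_basis) => /(_ (fun i => vec_mx w i j)) e_free.
rewrite e_free ?mxE //; transitivity (coords w 0 j); last by rewrite cw0 mxE.
by rewrite mxE; apply: eq_bigr => i' _; rewrite (tnth_nth 0).
Qed.

Lemma coords_onto (u : 'rV[L]_k) :
  coords (mxvec (\matrix_(i, j) coord e i (u 0 j))) = u.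
Proof.
apply/rowP => j; rewrite mxE mxvecK [RHS](expand_basis _ e_basis).
by apply: eq_bigr => i _; rewrite mxE.
Qed.

Lemma tensor_code_dim :
  is_linear_code_dim (tensor_code pi (fun c => exists u, c = u *m G)) (\dim {:L} * k).
Proof.
exists (lin1_mx tensor_gen); split.
  by apply: inj_row_free => w; rewrite mul_rV_lin1; exact: tensor_gen_kernel.
move=> v; split.
  move=> [_ [[u ->] ->]]; apply/submxP.
  exists (mxvec (\matrix_(i, j) coord e i (u 0 j))).
  by rewrite mul_rV_lin1 /= /tensor_gen coords_onto.
move/submxP => [w ->]; rewrite mul_rV_lin1.
by exists (coords w *m G); split; first by exists (coords w).
Qed.
End GeneratorMatrix.

Unset Implicit Arguments.
Theorem theorem3p3
  (F : finFieldType) (p : nat) (Hp : prime p) (Hodd : odd p) (HcharF : p \in [pchar F])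
  (L : fieldExtType F) (s n : nat) (HdimL : \dim {:L} = s)
  (Hs : (2 <= s)%N) (Hns : (s <= n)%N)
  (d : nat) (Hdmax : is_dmax_iso L n d) (Hd1 : (1 <= d)%N)
  (pi : {linear L -> 'rV[F]_n}) (Hpi : is_isometry pi)
  (Hpid : is_min_dist (image_code pi) d)
  (a b : L) (Hb : b != 0) (N : nat) (HN : (2 <= N)%N)
  (r m : nat) (Hr1 : (p ^ r %| N.+1)%N) (Hr2 : ~~ (p ^ r.+1 %| N.+1)%N)
  (Hm : N.+1 = (p ^ r * m.+1)%N)
  (E : fieldType) (iota : {rmorphism L -> E}) (theta mu : E)
  (Htheta : (2 * m.+1)%N.-primitive_root theta) (Hmu : mu ^+ 2 = -1)
  (Hr0 : r = 0%N -> notin_S1 m theta mu (iota b) (iota (a / b)))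
  (Hm0 : (1 <= r)%N -> m = 0%N -> notin_S2 mu (iota b) (iota (a / b)))
  (Hm1 : (1 <= r)%N -> (1 <= m)%N ->
           notin_S1 m theta mu (iota b) (iota (a / b)) /\
           notin_S2 mu (iota b) (iota (a / b)))
  (D : nat) (HD : is_min_dist (hatC N a b) D) :
  is_LCD (image_tensor_code N pi a b) /\
  is_linear_code_dim (image_tensor_code N pi a b) (s * N) /\
  exists Dstar : nat,
    is_min_dist (image_tensor_code N pi a b) Dstar /\ (d * D <= Dstar)%N.
Proof.
subst s; rewrite fmorph_div in Hr0 Hm0 Hm1.
have [e [e' [e_basis e_dual pi_dual]]] := Hpi.
have pi_inj := pi_kernel e_basis pi_dual.
have pcE : p \in [pchar E] := rmorph_pchar iota (rmorph_pchar (in_alg L) HcharF).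
have ndvd : ~~ (p %| m.+1)%N.
  by apply: contra Hr2 => p_m; rewrite Hm expnSr dvdn_pmul2l // expn_gt0 prime_gt0.
have S1 : notin_S1 m theta mu (iota b) (iota a / iota b).
  have [r0|r_gt0] := posnP r; first exact: Hr0.
  have [m0 i|m_gt0] := posnP m; last by case: (Hm1 r_gt0 m_gt0).
  by rewrite m0 => /andP[/leq_trans le1 /le1].
have S2 (r_gt0 : (1 <= r)%N) : notin_S2 mu (iota b) (iota a / iota b).
  by have [m0|m_gt0] := posnP m; [exact: Hm0 | case: (Hm1 r_gt0 m_gt0)].
have U_neq0 eps : eps = mu \/ eps = - mu -> cheb ((iota a + eps) / iota b) N != 0.
  by move/(cheb_excluded_neq0 pcE Hodd Hm ndvd Htheta); apply; rewrite ?fmorph_eq0.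
have hatC_lcd := hatC_LCD Hb Hmu (U_neq0 _ (or_introl erefl)) (U_neq0 _ (or_intror erefl)).
split; [|split].
- by apply: tensor_LCD => // _ lam [u ->]; exists (lam *: u); rewrite scalemxAl.
- exact: tensor_code_dim (row_free_systematic _) e_basis pi_inj.
- exact: tensor_min_dist pi_inj (image_wt_ge pi_inj Hpid) HD.
Qed.
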